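(* Let $\widehat\Gamma$ be a Harnack graph with controlled, uniformly lazy weights, let $K$ be a set of vertices, and suppose $\Gamma:=\widehat\Gamma\setminus K$ is an infinite inner uniform subgraph of $\widehat\Gamma$. If $\widehat\Gamma$ is $S$-transient with respect to $K$, then $h:=1-\psi_K$ is a harmonic profile of $\Gamma$. If $\widehat\Gamma$ is uniformly $S$-transient with respect to $K$, then there is $\varepsilon_*>0$ such that $\varepsilon_*\le 1-\psi_K(x)\le 1$ for all $x\in\Gamma$ (so the profile satisfies $h\approx1$).
   Context: $\widehat{\Gamma}$: infinite simple connected graph, symmetric edge weights $\mu_{xy}$ ($\ne0$ iff $x\sim y$), vertex weights $\pi>0$ with $\sum_{y\sim x}\mu_{xy}\le\pi(x)$; $\mathcal{K}(x,y)=\mu_{xy}/\pi(x)$ for $x\ne y$, $\mathcal{K}(x,x)=1-\sum_{z\sim x}\mu_{xz}/\pi(x)$; controlled weights ($\mu_{xy}/\pi(x)\ge1/C_c$ for $y\sim x$) and uniformly lazy ($\mathcal{K}(x,x)\ge C_e>0$). Harnack graph: $p(n,x,y)=\mathcal{K}^n(x,y)/\pi(y)$ satisfies $\frac{c_1}{V(x,\sqrt n)}e^{-d(x,y)^2/(c_2n)}\le p(n,x,y)\le\frac{c_3}{V(x,\sqrt n)}e^{-d(x,y)^2/(c_4 n)}$ for $n\ge d(x,y)$, with $d$ the graph distance and $V(x,r)=\pi(B(x,r))$. $\Gamma$ is the subgraph induced on the complement of $K$, $d_\Gamma$ its intrinsic graph distance; $\partial\Gamma$ is the set of vertices outside $\Gamma$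 adjacent to $\Gamma$. $\Gamma$ is inner uniform if there are $c_u,C_U>0$ such that any $x,y\in\Gamma$ are joined by a path $x=x_0,\dots,x_k=y$ in $\Gamma$ with $k\le C_U d_\Gamma(x,y)$ and $d(x_j,\partial\Gamma)\ge c_u(1+\min\{j,k-j\})$ for all $j$. A harmonic profile of $\Gamma$ is a function $h$ with $h>0$ on $\Gamma$, $h=0$ off $\Gamma$, and $h(x)=\sum_{y}\mathcal{K}(x,y)h(y)$ for all $x\in\Gamma$. $\psi_K(x)=\mathbb{P}^x(\tau_K<\infty)$ with $\tau_K$ the first hitting time of $K$. $\widehat\Gamma$ is $S$-transient w.r.t. $K$ if $\psi_K(x)<1$ for some $x$; uniformly $S$-transient if there are $L,\varepsilon>0$ with $\psi_K(x)\le1-\varepsilon$ whenever $d(x,K)\ge L$. *)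

From mathcomp Require Import all_boot all_order all_algebra.
From mathcomp Require Import all_classical all_reals all_analysis.
Import Order.TTheory GRing.Theory Num.Theory.
Set Implicit Arguments. Unset Strict Implicit. Unset Printing Implicit Defensive.
Local Open Scope classical_set_scope.
Local Open Scope ring_scope.

Section GraphDefs.
Context {R : realType} {V : choiceType}.
Implicit Types (mu : V -> V -> R) (pi : V -> R) (K : set V).

Definition adj mu (x y : V) : Prop := mu x y != 0.

Definition walk (A : V -> V -> Prop) (k : nat) (x y : V) (p : nat -> V) : Prop :=
  p 0%N = x /\ p k = y /\ forall i, (i < k)%N -> A (p i) (p i.+1).

Definition joined (A : V -> V -> Prop) (k : nat) (x y : V) : Prop :=
  exists p, walk A k x y p.

Lemma joined_ex (A : V -> V -> Prop) x y :
  (exists k, joined A k x y) -> exists k, `[< joined A k x y >].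
Proof. by case=> k hk; exists k; apply/asboolP. Qed.

(* graph distance w.r.t. A: least length of a walk (0 if no walk exists) *)
Definition gdist (A : V -> V -> Prop) (x y : V) : nat :=
  match pselect (exists k, joined A k x y) with
  | left e => ex_minn (joined_ex e)
  | right _ => 0%N
  end.

Definition dist mu := gdist (adj mu).

Definition Kxy mu pi (x y : V) : R :=
  if x == y then 1 - fine (\esum_(z in [set z | adj mu x z]) (mu x z)%:E) / pi x
  else mu x y / pi x.

Definition Kop mu pi (f : V -> R) (x : V) : R :=
  fine (\esum_(y in [set: V]) (Kxy mu pi x y * f y)%:E).

Fixpoint Kpow mu pi (n : nat) : V -> V -> R :=
  match n with
  | 0%N => fun x y => (x == y)%:R
  | n'.+1 => fun x y => Kop mu pi (fun z => Kpow mu pi n' z y) x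
  end.

Definition heat mu pi n x y : R := Kpow mu pi n x y / pi y.

Definition vol mu pi (x : V) (r : R) : R :=
  fine (\esum_(y in [set y | ((dist mu x y)%:R : R) <= r]) (pi y)%:E).

Definition weighted_graph mu pi : Prop :=
  (forall x y, mu x y = mu y x) /\
  (forall x y, 0 <= mu x y) /\
  (forall x, mu x x = 0) /\
  (forall x, 0 < pi x) /\
  (forall x, (\esum_(y in [set y | adj mu x y]) (mu x y)%:E <= (pi x)%:E)%E) /\
  (forall x y, exists k, joined (adj mu) k x y) /\
  infinite_set [set: V].

Definition controlled mu pi : Prop :=
  exists Cc : R, 0 < Cc /\ forall x y, adj mu x y -> 1 / Cc <= mu x y / pi x.

Definition uniformly_lazy mu pi : Prop :=
  exists Ce : R, 0 < Ce /\ forall x, Ce <= Kxy mu pi x x.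

Definition harnack mu pi : Prop :=
  exists c1 c2 c3 c4 : R, [/\ 0 < c1, 0 < c2, 0 < c3, 0 < c4 &
    forall (n : nat) (x y : V), (dist mu x y <= n)%N ->
      c1 / vol mu pi x (Num.sqrt n%:R)
         * expR (- ((dist mu x y)%:R ^+ 2) / (c2 * n%:R))
        <= heat mu pi n x y
      /\ heat mu pi n x y <=
      c3 / vol mu pi x (Num.sqrt n%:R)
         * expR (- ((dist mu x y)%:R ^+ 2) / (c4 * n%:R))].

(* Gamma = complement of K; its induced adjacency, intrinsic distance, boundary *)
Definition adjG mu K (a b : V) : Prop := [/\ adj mu a b, ~ K a & ~ K b].
Definition distG mu K := gdist (adjG mu K).
Definition bdry mu K : set V := [set z | K z /\ exists x, ~ K x /\ adj mu z x].

Definition inner_uniform mu K : Prop :=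
  exists cu CU : R, [/\ 0 < cu, 0 < CU &
    forall x y, ~ K x -> ~ K y ->
      exists (k : nat) (p : nat -> V), [/\ walk (adjG mu K) k x y p,
        (k%:R <= CU * (distG mu K x y)%:R) &
        forall j, (j <= k)%N -> forall z, bdry mu K z ->
          cu * (1 + (minn j (k - j))%:R) <= (dist mu (p j) z)%:R]].

Definition harmonic_profile mu pi K (h : V -> R) : Prop :=
  [/\ (forall x, ~ K x -> 0 < h x),
      (forall x, K x -> h x = 0)
    & (forall x, ~ K x -> h x = Kop mu pi h x)].

(* hitP n x = P^x(tau_K <= n), tau_K = inf {n >= 0 : X_n in K},
   computed by first-step analysis *)
Fixpoint hitP mu pi K (n : nat) : V -> R :=
  match n with
  | 0%N => fun x => if `[< K x >] then 1 else 0
  | n'.+1 => fun x => if `[< K x >] then 1 else Kop mu pi (hitP mu pi K n') x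
  end.

(* psi_K(x) = P^x(tau_K < oo) = sup_n P^x(tau_K <= n) *)
Definition psiK mu pi K (x : V) : R := sup [set hitP mu pi K n x | n in [set: nat]].

Definition S_transient mu pi K : Prop := exists x, psiK mu pi K x < 1.

Definition unif_S_transient mu pi K : Prop :=
  exists L eps : R, [/\ 0 < L, 0 < eps &
    forall x, (forall z, K z -> L <= (dist mu x z)%:R) -> psiK mu pi K x <= 1 - eps].

End GraphDefs.

From mathcomp Require Import all_boot all_order all_algebra.
From mathcomp Require Import all_classical all_reals all_analysis.
From mathcomp Require Import finmap.
From mathcomp Require Import lra zify.
Import numFieldNormedType.Exports.
Import Order.TTheory GRing.Theory Num.Theory.
Local Open Scope classical_set_scope.
Local Open Scope ring_scope.

(* psi_K is the increasing limit of the first-step recursion hitP, so the escape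
   probability h = 1 - psi_K is harmonic on Gamma and vanishes on K. Controlled
   weights make the graph locally finite and give every edge a transition
   probability at least 1/C_c, so harmonicity yields h(x_j) <= C_c^j h(x) along
   any walk x = x_0, x_1, ... in Gamma. Positivity of h follows by walking from x
   to a vertex where psi_K < 1. For the uniform bound, an inner uniform path from x
   to a vertex y with d(x, y) >= 2J is, at step J, at distance >= c_u (1 + J) > L
   from the boundary of Gamma, hence from K, where h >= eps; so h(x) >= eps / C_c^J. *)

Section GraphDistance.
Context {V : choiceType} {A : V -> V -> Prop}.

Lemma gdist_joined {x y} : (exists k, joined A k x y) -> joined A (gdist A x y) x y.
Proof.
by rewrite /gdist; case: pselect => // e _; case: ex_minnP => m /asboolP.
Qed.

Lemma gdist_min {x y k} : joined A k x y -> (gdist A x y <= k)%N.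
Proof.
rewrite /gdist; case: pselect => [e|ne] xy; last by case: ne; exists k.
by case: ex_minnP => m _; apply; apply/asboolP.
Qed.

Lemma walk_prefix {k x y p} i : walk A k x y p -> (i <= k)%N -> walk A i x (p i) p.
Proof. by case=> p0 [_ p_step] ik; do 2!split=> //; move=> j ji; apply: p_step; lia. Qed.

Lemma joinedSr {k x y} : joined A k.+1 x y -> exists2 z, joined A k x z & A z y.
Proof.
case=> p walk_p; have [_ [pk p_step]] := walk_p.
by exists (p k); [exists p; exact: walk_prefix walk_p _ | rewrite -pk; exact: p_step].
Qed.

Lemma walk_first_in {P : set V} {k a z p} : walk A k a z p -> ~ P a -> P z ->
  exists2 i, (0 < i <= k)%N & P (p i) /\ ~ P (p i.-1).
Proof.
case=> p0 [pk _] Pa Pz.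
have P_hit : exists i, `[< P (p i) >] by exists k; apply/asboolP; rewrite pk.
case: (ex_minnP P_hit) => -[|i] /asboolP Pi i_min; first by rewrite p0 in Pi.
exists i.+1; last by split=> // Pi'; have := i_min i (asboolT Pi'); rewrite ltnn.
by rewrite /= i_min //; apply/asboolP; rewrite pk.
Qed.

Lemma sub_walk {B : V -> V -> Prop} {k x y p} : (forall a b, A a b -> B a b) ->
  walk A k x y p -> walk B k x y p.
Proof. by move=> AB [p0 [pk p_step]]; do 2!split=> //; move=> i ik; apply/AB/p_step. Qed.

Definition gball x r : set V := [set y | exists2 k, (k <= r)%N & joined A k x y].

Hypothesis A_locally_finite : forall x, finite_set [set y | A x y].

Lemma gball_finite x r : finite_set (gball x r).
Proof.
elim: r => [|r IH].
  apply: sub_finite_set (finite_set1 x) => y [k].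
  by rewrite leqn0 => /eqP -> [p [p0 [<- _]]]; rewrite p0.
apply: (@sub_finite_set _ _ (gball x r `|` \bigcup_(z in gball x r) [set y | A z y])).
  move=> y [[|k] kr xy]; first by left; exists 0%N.
  have [z xz zy] := joinedSr xy.
  have [kr'|rk] := leqP k.+1 r; first by left; exists k.+1.
  by right; exists z => //; exists k => //; lia.
by rewrite finite_setU; split => //; apply: bigcup_finite.
Qed.

Lemma exists_far {S : set V} {x} n : infinite_set S ->
  (forall y, exists k, joined A k x y) -> exists2 y, S y & (n <= gdist A x y)%N.
Proof.
move=> S_inf conn; apply: contrapT => no_far.
apply/S_inf/(sub_finite_set _ (gball_finite x n)).
move=> y Sy; exists (gdist A x y); last exact: gdist_joined.
by rewrite leqNgt; apply/negP => far; apply: no_far; exists y => //; exact: ltnW.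
Qed.

End GraphDistance.

Section Neighbourhoods.
Context {R : realType} {V : choiceType}.

Definition nbr (mu : V -> V -> R) x : set V := [set y | adj mu x y].

Definition nbhd (mu : V -> V -> R) x : {fset V} := fset_set (x |` nbr mu x).

Definition escapeP (mu : V -> V -> R) (pi : V -> R) (K : set V) x : R :=
  1 - psiK mu pi K x.

End Neighbourhoods.

Section ControlledWeights.
(* The space in [{ pi] is needed: [{pi] is a token (generic_quotient). *)
Context {R : realType} {V : choiceType} {mu : V -> V -> R} { pi : V -> R }.
Hypothesis mu_sym : forall x y, mu x y = mu y x.
Hypothesis mu_ge0 : forall x y, 0 <= mu x y.
Hypothesis mu_xx : forall x, mu x x = 0.
Hypothesis pi_gt0 : forall x, 0 < pi x.
Hypothesis esum_mu_le : forall x, (\esum_(y in nbr mu x) (mu x y)%:E <= (pi x)%:E)%E.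
Context {Cc : R}.
Hypothesis Cc_gt0 : 0 < Cc.
Hypothesis controlled_mu : forall x y, adj mu x y -> 1 / Cc <= mu x y / pi x.

Lemma adj_neq x y : adj mu x y -> x != y.
Proof. by apply: contraNneq => ->; rewrite /adj mu_xx. Qed.

Lemma adj_mu_ge x y : adj mu x y -> pi x / Cc <= mu x y.
Proof.
move=> /controlled_mu; rewrite div1r => /(ler_wpM2l (ltW (pi_gt0 x))).
by rewrite mulrCA mulfV ?gt_eqF ?mulr1.
Qed.

Lemma nbr_finite x : finite_set (nbr mu x).
Proof.
apply: contrapT => /(infinite_set_fset (Num.Def.archi_bound Cc).+1)[B Bnbr szB].
have sumB_le : \sum_(y <- B) mu x y <= pi x.
  rewrite -lee_fin -sumEFin; apply: le_trans (esum_mu_le x).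
  apply: esum_ge; exists [set` B]; first by [].
  by rewrite fsbig_finite //= set_fsetK.
have sumB_ge : pi x / Cc *+ #|` B| <= \sum_(y <- B) mu x y.
  have -> : pi x / Cc *+ #|` B| = \sum_(y <- B) pi x / Cc.
    by rewrite big_const_seq count_predT iter_addr_0.
  by rewrite !big_seq; apply: ler_sum => y yB; exact: adj_mu_ge (Bnbr y yB).
have : #|` B|%:R <= Cc.
  move: (le_trans sumB_ge sumB_le).
  by rewrite -mulr_natl mulrA ler_pdivrMr // mulrC ler_pM2l.
move/le_lt_trans/(_ (archi_boundP (ltW Cc_gt0))); rewrite ltr_nat.
by rewrite ltnNge (ltnW szB).
Qed.

Lemma closed_nbr_finite x : finite_set (x |` nbr mu x).
Proof. by rewrite finite_setU; split; [exact: finite_set1 | exact: nbr_finite]. Qed.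

Lemma mem_nbhd x y : y \in nbhd mu x <-> y = x \/ adj mu x y.
Proof. by rewrite in_fset_set ?in_setE //; exact: closed_nbr_finite. Qed.

Lemma self_in_nbhd x : x \in nbhd mu x.
Proof. by apply/mem_nbhd; left. Qed.

Lemma esum_nbr x :
  \esum_(y in nbr mu x) (mu x y)%:E = (\sum_(y <- nbhd mu x) mu x y)%:E.
Proof.
have nbr_fin := nbr_finite x.
rewrite esum_fset // => [|y _]; last by rewrite lee_fin.
rewrite fsumEFin // /nbhd fset_setU ?fset_set1 // big_fsetU1 /=.
  by rewrite mu_xx add0r fsbig_finite.
by rewrite in_fset_set //; apply/negP; rewrite in_setE => /adj_neq; rewrite eqxx.
Qed.

Lemma Kxy_off x y : x != y -> Kxy mu pi x y = mu x y / pi x.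
Proof. by rewrite /Kxy => /negbTE ->. Qed.

Lemma Kxy_diag x : Kxy mu pi x x = 1 - (\sum_(y <- nbhd mu x) mu x y) / pi x.
Proof. by rewrite /Kxy eqxx esum_nbr. Qed.

Lemma Kxy_ge0 x y : 0 <= Kxy mu pi x y.
Proof.
have [<-|xy] := eqVneq x y; last by rewrite Kxy_off // divr_ge0 // ltW.
have := esum_mu_le x; rewrite esum_nbr lee_fin => sum_le.
by rewrite Kxy_diag subr_ge0 ler_pdivrMr // mul1r.
Qed.

Lemma Kxy_adj_ge x y : adj mu x y -> 1 / Cc <= Kxy mu pi x y.
Proof. by move=> xy; rewrite Kxy_off ?adj_neq //; exact: controlled_mu. Qed.

Lemma Kxy_eq0 x y : y \notin nbhd mu x -> Kxy mu pi x y = 0.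
Proof.
move=> y_nbhd; have [xy_eq|xy] := eqVneq x y.
  by rewrite -xy_eq self_in_nbhd in y_nbhd.
rewrite Kxy_off // (_ : mu x y = 0) ?mul0r //.
by apply/eqP; apply: contraNT y_nbhd => xy_adj; apply/mem_nbhd; right.
Qed.

Lemma Kxy_sum1 x : \sum_(y <- nbhd mu x) Kxy mu pi x y = 1.
Proof.
have bigD1_self := bigD1_seq _ (self_in_nbhd x) (fset_uniq (nbhd mu x)).
rewrite bigD1_self Kxy_diag bigD1_self /= mu_xx add0r.
have -> : \sum_(y <- nbhd mu x | y != x) Kxy mu pi x y =
          (\sum_(y <- nbhd mu x | y != x) mu x y) / pi x.
  by rewrite mulr_suml; apply: eq_bigr => y yx; rewrite Kxy_off // eq_sym.
by rewrite subrK.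
Qed.

Lemma Kop_nbhd f x : (forall y, 0 <= f y) ->
  Kop mu pi f x = \sum_(y <- nbhd mu x) Kxy mu pi x y * f y.
Proof.
move=> f_ge0; have cnbr_fin := closed_nbr_finite x; rewrite /Kop.
have -> : \esum_(y in [set: V]) (Kxy mu pi x y * f y)%:E =
          \esum_(y in (x |` nbr mu x)) (Kxy mu pi x y * f y)%:E.
  rewrite [RHS]esum_mkcond; apply: eq_esum => y _.
  by case: ifPn => // y_cnbr; rewrite Kxy_eq0 ?mul0r // in_fset_set.
rewrite esum_fset // => [|y _]; last by rewrite lee_fin mulr_ge0 ?Kxy_ge0.
by rewrite fsumEFin //= fsbig_finite.
Qed.

Lemma Kop_ge0 f x : (forall y, 0 <= f y) -> 0 <= Kop mu pi f x.
Proof.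
by move=> f_ge0; rewrite Kop_nbhd // sumr_ge0 // => y _; rewrite mulr_ge0 ?Kxy_ge0.
Qed.

Lemma Kop_le1 f x : (forall y, 0 <= f y <= 1) -> Kop mu pi f x <= 1.
Proof.
move=> f01; rewrite Kop_nbhd -?(Kxy_sum1 x) => [|y]; last by case/andP: (f01 y).
by apply: ler_sum => y _; rewrite ler_piMr ?Kxy_ge0 //; case/andP: (f01 y).
Qed.

Lemma Kop_le f g x : (forall y, 0 <= f y) -> (forall y, f y <= g y) ->
  Kop mu pi f x <= Kop mu pi g x.
Proof.
move=> f_ge0 fg; have g_ge0 y := le_trans (f_ge0 y) (fg y).
by rewrite !Kop_nbhd //; apply: ler_sum => y _; rewrite ler_wpM2l ?Kxy_ge0.
Qed.

Context {K : set V}.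

Lemma hitP_bound n x : 0 <= hitP mu pi K n x <= 1.
Proof.
elim: n x => [|n IH] x /=; case: ifP; rewrite ?ler01 ?lexx //.
by rewrite Kop_ge0 ?Kop_le1 // => y; case/andP: (IH y).
Qed.

Lemma hitP_ge0 n x : 0 <= hitP mu pi K n x.
Proof. by case/andP: (hitP_bound n x). Qed.

Lemma hitP_leS n x : hitP mu pi K n x <= hitP mu pi K n.+1 x.
Proof.
elim: n x => [|n IH] x /=; case: ifP; rewrite ?lexx // => _.
  exact: Kop_ge0 (hitP_ge0 0).
exact: Kop_le (hitP_ge0 n) IH.
Qed.

Lemma hitP_ubound x : has_ubound [set hitP mu pi K n x | n in [set: nat]].
Proof. by exists 1 => _ [n _ <-]; case/andP: (hitP_bound n x). Qed.

Lemma hitP_cvg x : hitP mu pi K n x @[n --> \oo] --> psiK mu pi K x.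
Proof.
apply: nondecreasing_cvgn (hitP_ubound x).
by apply/nondecreasing_seqP => n; exact: hitP_leS.
Qed.

Lemma psiK_bound x : 0 <= psiK mu pi K x <= 1.
Proof.
apply/andP; split.
  by apply: le_trans (ub_le_sup (hitP_ubound x) _); [exact: (hitP_ge0 0) | exists 0%N].
apply: ge_sup; first by exists (hitP mu pi K 0 x), 0%N.
by move=> _ [n _ <-]; case/andP: (hitP_bound n x).
Qed.

Lemma psiK_K x : K x -> psiK mu pi K x = 1.
Proof.
move=> Kx; apply/le_anti; rewrite (andP (psiK_bound x)).2 /=.
apply: le_trans (ub_le_sup (hitP_ubound x) _); last by exists 0%N.
by rewrite /= ifT //; apply/asboolP.
Qed.

Lemma psiK_harmonic x : ~ K x ->
  psiK mu pi K x = \sum_(y <- nbhd mu x) Kxy mu pi x y * psiK mu pi K y.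
Proof.
move=> xK; have := hitP_cvg x; rewrite -cvg_shiftS /=.
have -> : (fun n => hitP mu pi K n.+1 x) =
          (fun n => \sum_(y <- nbhd mu x) Kxy mu pi x y * hitP mu pi K n y).
  apply/funext => n /=; rewrite ifF ?Kop_nbhd //; last by apply/asboolP.
  exact: hitP_ge0.
move=> succ_cvg.
have sum_cvg : \sum_(y <- nbhd mu x) Kxy mu pi x y * hitP mu pi K n y @[n --> \oo]
               --> \sum_(y <- nbhd mu x) Kxy mu pi x y * psiK mu pi K y.
  apply: (cvg_big add_continuous) => // y _.
  exact: cvgM (cvg_cst _) (hitP_cvg y).
exact: cvg_unique succ_cvg sum_cvg.
Qed.

Lemma escapeP_bound x : 0 <= escapeP mu pi K x <= 1.
Proof. by rewrite /escapeP subr_ge0 gerBl; case/andP: (psiK_bound x) => -> ->. Qed.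

Lemma escapeP_K x : K x -> escapeP mu pi K x = 0.
Proof. by move=> Kx; rewrite /escapeP psiK_K ?subrr. Qed.

Lemma escapeP_harmonic x : ~ K x ->
  escapeP mu pi K x = \sum_(y <- nbhd mu x) Kxy mu pi x y * escapeP mu pi K y.
Proof.
move=> xK; rewrite /escapeP psiK_harmonic // -{1}(Kxy_sum1 x) -sumrB.
by apply: eq_bigr => y _; rewrite mulrBr mulr1.
Qed.

Lemma escapeP_adj_le x y : ~ K x -> adj mu x y ->
  escapeP mu pi K y <= Cc * escapeP mu pi K x.
Proof.
move=> xK xy; have y_nbhd : y \in nbhd mu x by apply/mem_nbhd; right.
have e_ge0 z : 0 <= escapeP mu pi K z by case/andP: (escapeP_bound z).
rewrite -ler_pdivrMl // (escapeP_harmonic _ xK) (bigD1_seq y y_nbhd) ?fset_uniq //=.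
rewrite -div1r ler_wpDr ?(ler_wpM2r _ (Kxy_adj_ge _ _ xy)) //.
by apply: sumr_ge0 => z _; rewrite mulr_ge0 ?Kxy_ge0.
Qed.

Lemma escapeP_walk_le {k x y p} : walk (adjG mu K) k x y p ->
  forall i, (i <= k)%N -> escapeP mu pi K (p i) <= Cc ^+ i * escapeP mu pi K x.
Proof.
case=> p0 [_ p_step]; elim=> [|i IH] ik; first by rewrite p0 expr0 mul1r.
have [step_adj step_K _] := p_step i ik.
rewrite exprS -mulrA; apply: le_trans (escapeP_adj_le _ _ step_K step_adj) _.
by rewrite ler_pM2l // IH // ltnW.
Qed.

Lemma adjG_walk_notK {k x y p} : walk (adjG mu K) k x y p -> ~ K x ->
  forall i, (i <= k)%N -> ~ K (p i).
Proof. by case=> p0 [_ p_step] xK [|i] ik; [rewrite p0 | case: (p_step i ik)]. Qed.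

Lemma inner_uniform_connected x y : inner_uniform mu K -> ~ K x -> ~ K y ->
  exists k p, walk (adjG mu K) k x y p.
Proof.
by case=> cu [CU [_ _ iu]] xK yK; have [k [p [walk_p _ _]]] := iu x y xK yK; exists k, p.
Qed.

Hypothesis mu_connected : forall x y, exists k, joined (adj mu) k x y.

Lemma exists_bdry_closer a z : ~ K a -> K z ->
  exists2 b, bdry mu K b & (dist mu a b <= dist mu a z)%N.
Proof.
move=> aK Kz; have [q walk_q] := gdist_joined (mu_connected a z).
have [i /andP[i_gt0 ik] [Kqi qiK]] := walk_first_in walk_q aK Kz.
exists (q i).
  split=> //; exists (q i.-1); split=> //; rewrite /adj mu_sym.
  by have [_ [_ q_step]] := walk_q; have := q_step i.-1; rewrite prednK //; apply; lia.
by apply: (leq_trans (gdist_min _) ik); exists q; exact: walk_prefix walk_q ik.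
Qed.

Hypothesis Gamma_infinite : infinite_set (~` K).

Lemma inner_uniform_deep_walk : inner_uniform mu K ->
  exists2 cu : R, 0 < cu & forall x J, ~ K x -> exists w p,
    walk (adjG mu K) J x w p /\ forall z, K z -> cu * (1 + J%:R) <= (dist mu w z)%:R.
Proof.
case=> cu [CU [cu_gt0 _ iu]]; exists cu => // x J xK.
have [y yK far] := exists_far nbr_finite J.*2 Gamma_infinite (mu_connected x).
have [k [p [walk_p _ p_deep]]] := iu x y xK yK.
have kJ : (J.*2 <= k)%N.
  by apply: leq_trans far (gdist_min _); exists p; apply: sub_walk walk_p => a b [].
exists (p J), p; split=> [|z Kz]; first by apply: walk_prefix walk_p _; lia.
have pJK : ~ K (p J) by apply: (adjG_walk_notK walk_p xK); lia.
have [b bb db] := exists_bdry_closer (p J) z pJK Kz.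
have := p_deep J ltac:(lia) b bb; rewrite (_ : minn J (k - J) = J); last by lia.
by move/le_trans; apply; rewrite ler_nat.
Qed.

Lemma escapeP_harmonic_profile : inner_uniform mu K -> S_transient mu pi K ->
  harmonic_profile mu pi K (escapeP mu pi K).
Proof.
move=> iu [x0 psi_x0]; have e_x0 : 0 < escapeP mu pi K x0 by rewrite subr_gt0.
have x0K : ~ K x0 by move=> /psiK_K psi1; rewrite psi1 ltxx in psi_x0.
split=> [x xK | x /escapeP_K // | x xK]; last first.
  by rewrite Kop_nbhd -?escapeP_harmonic // => y; case/andP: (escapeP_bound y).
have [k [p walk_p]] := inner_uniform_connected x x0 iu xK x0K.
have [_ [pk _]] := walk_p.
have := escapeP_walk_le walk_p k (leqnn k); rewrite pk => /(lt_le_trans e_x0).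
by rewrite pmulr_rgt0 // exprn_gt0.
Qed.

Lemma escapeP_uniform_lb : inner_uniform mu K -> unif_S_transient mu pi K ->
  exists2 eps : R, 0 < eps & forall x, ~ K x -> eps <= escapeP mu pi K x.
Proof.
move=> /inner_uniform_deep_walk [cu cu_gt0 deep] [L [eps [L_gt0 eps_gt0 far_psi]]].
pose J := Num.Def.archi_bound (L / cu).
have L_le : L <= cu * (1 + J%:R).
  have := archi_boundP (ltW (divr_gt0 L_gt0 cu_gt0)); rewrite ltr_pdivrMr // mulrC.
  by move/ltW/le_trans; apply; rewrite ler_pM2l // lerDr.
exists (eps / Cc ^+ J) => [|x xK]; first by rewrite divr_gt0 // exprn_gt0.
have [w [p [walk_p w_deep]]] := deep x J xK.
have eps_w : eps <= escapeP mu pi K w.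
  have := far_psi w (fun z Kz => le_trans L_le (w_deep z Kz)); rewrite /escapeP; lra.
have [_ [pJ _]] := walk_p; have := escapeP_walk_le walk_p J (leqnn J); rewrite pJ.
by rewrite ler_pdivrMr ?exprn_gt0 // mulrC; exact: le_trans eps_w.
Qed.

End ControlledWeights.

Theorem lemma3p11 (R : realType) (V : choiceType) (mu : V -> V -> R) (pi : V -> R)
    (K : set V) :
  weighted_graph mu pi -> controlled mu pi -> uniformly_lazy mu pi ->
  harnack mu pi -> infinite_set (~` K) -> inner_uniform mu K ->
  (S_transient mu pi K ->
     harmonic_profile mu pi K (fun x => 1 - psiK mu pi K x)) /\
  (unif_S_transient mu pi K ->
     exists eps : R, 0 < eps /\
       forall x, ~ K x -> eps <= 1 - psiK mu pi K x /\ 1 - psiK mu pi K x <= 1).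
Proof.
move=> [mu_sym [mu_ge0 [mu_xx [pi_gt0 [esum_mu_le [mu_connected _]]]]]]
  [Cc [Cc_gt0 controlled_mu]] _ _ Gamma_infinite iu.
split=> [S_trans | unif_trans].
  exact: (escapeP_harmonic_profile mu_ge0 mu_xx pi_gt0 esum_mu_le Cc_gt0
    controlled_mu iu S_trans).
have [eps eps_gt0 eps_le] := escapeP_uniform_lb mu_sym mu_ge0 mu_xx pi_gt0 esum_mu_le
  Cc_gt0 controlled_mu mu_connected Gamma_infinite iu unif_trans.
exists eps; split=> // x xK; split; first exact: eps_le.
by case/andP: (escapeP_bound mu_ge0 mu_xx pi_gt0 esum_mu_le Cc_gt0 controlled_mu
  (K := K) x).
Qed.
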